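(* Let $n\geq 2$ be an integer. The annihilating-ideal graph $\mathbb{AG}(\mathbb{Z}_n)$ is perfect if and only if $n$ is of one of the forms $p_1^{\alpha_1}$, $p_1^{\alpha_1}p_2^{\alpha_2}$, $p_1^{\alpha_1}p_2p_3$, or $p_1p_2p_3p_4$, where $p_1,p_2,p_3,p_4$ are distinct primes and $\alpha_1,\alpha_2\in\mathbb{N}=\{1,2,3,\dots\}$.
   Context: For a commutative ring $R$ with unity, the annihilating-ideal graph $\mathbb{AG}(R)$ is the simple graph whose vertex set is the set of all non-zero ideals $I$ of $R$ with non-zero annihilator (i.e. there is a non-zero ideal $J$ with $IJ=0$), and two distinct vertices $I,J$ are adjacent if and only if $IJ=0$. A graph $G$ is perfect if $\omega(H)=\chi(H)$ (clique number equals chromatic number) for every induced subgraph $H$ of $G$. *)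

From mathcomp Require Import all_boot all_order all_algebra.
Set Implicit Arguments. Unset Strict Implicit. Unset Printing Implicit Defensive.
Import GRing.Theory.
Local Open Scope ring_scope.

Section Ideals.
Variable R : finComNzRingType.

Definition is_ideal (I : {set R}) : bool :=
  [&& (0 : R) \in I,
      [forall x in I, forall y in I, x + y \in I] &
      [forall r : R, forall x in I, r * x \in I]].

Definition zero_ideal (I : {set R}) : bool := I == [set (0 : R)].

(* IJ = 0 : the product ideal (generated by all x*y, x in I, y in J)
   is zero iff every product x*y vanishes. *)
Definition ideal_prod_zero (I J : {set R}) : bool :=
  [forall x in I, forall y in J, x * y == 0].

Definition AG_vertices : {set {set R}} :=
  [set I | [&& is_ideal I, ~~ zero_ideal I &
     [exists J : {set R}, [&& is_ideal J, ~~ zero_ideal J & ideal_prod_zero I J]]]].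

Definition AG_adj : rel {set R} := fun I J => (I != J) && ideal_prod_zero I J.

End Ideals.

Section Graphs.
Variable T : finType.
Variable e : rel T.

Definition is_clique (K : {set T}) : bool :=
  [forall x in K, forall y in K, (x != y) ==> e x y].

Definition clique_number (S : {set T}) : nat :=
  \max_(K in powerset S | is_clique K) #|K|.

(* the subgraph induced on S admits a proper colouring with k colours
   (colours are the numbers < k; #|T| colours always suffice as codomain) *)
Definition colorable (S : {set T}) (k : nat) : bool :=
  [exists f : {ffun T -> 'I_#|T|},
     [forall x in S, (f x < k)%N] &&
     [forall x in S, forall y in S, e x y ==> (f x != f y)]].

(* chromatic number of the subgraph induced by S: least k with a proper
   k-colouring (k = #|S| always works) *)
Definition chromatic_number (S : {set T}) : nat :=
  \big[minn/#|S|]_(k < #|S|.+1 | colorable S k) k.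

Definition perfect (V : {set T}) : Prop :=
  forall S : {set T}, S \subset V -> clique_number S = chromatic_number S.

End Graphs.

(* An ideal of Z_n is the set of multiples of a divisor d of n, and the product of the ideals of
   d and d' is zero iff n | d d'. So AG(Z_n) is the graph on the divisors 1 < d < n of n in which
   d ~ d' iff d <> d' and n | d d'.
   For n = p^a m with m in {1, q^b, qr}, pick in a nonempty induced subgraph a vertex of least
   p-adic valuation (for n = pqrs: a vertex divisible by the fewest primes). Either it is
   simplicial, or it has two non-adjacent neighbours one of which dominates the other. Deleting
   such a vertex, any colouring with omega colours extends, so chi = omega by induction.
   For every other n there are divisors c_1, ..., c_5 of n with c_i c_(i+1) | n and
   c_i c_(i+2) not dividing n; the vertices n / c_i then induce a pentagon, for which omega = 2
   and chi = 3. *)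

From mathcomp Require Import all_boot all_order all_algebra.
From mathcomp Require Import zify.
Set Implicit Arguments. Unset Strict Implicit. Unset Printing Implicit Defensive.
Import GRing.Theory.

(** * Colourings, cliques and perfection *)

Lemma card_le_of_injective_below (T : finType) (A : {pred T}) (g : T -> nat) k :
  {in A &, injective g} -> {in A, forall x, g x < k} -> #|A| <= k.
Proof.
move=> g_inj g_lt; rewrite cardE -(size_map g) -(size_iota 0 k).
have g_uniq : uniq (map g (enum A)).
  by rewrite map_inj_in_uniq ?enum_uniq // => x y; rewrite !mem_enum; apply: g_inj.
apply: uniq_leq_size g_uniq _ => c /mapP[x]; rewrite mem_enum => /g_lt x_lt ->.
by rewrite mem_iota.
Qed.

Lemma exists_fresh_below (T : finType) (A : {pred T}) (g : T -> nat) k :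
  #|A| < k -> exists2 c, c < k & {in A, forall x, g x != c}.
Proof.
move=> A_lt_k; have [hit | /allPn[c]] := boolP (all (mem (map g (enum A))) (iota 0 k)).
  suff: k <= #|A| by rewrite leqNgt A_lt_k.
  rewrite cardE -(size_map g) -(size_iota 0 k); exact: uniq_leq_size (iota_uniq 0 k) (allP hit).
rewrite mem_iota /= => c_lt_k c_fresh; exists c => // x xA.
by apply: contra c_fresh => /eqP <-; apply: map_f; rewrite mem_enum.
Qed.

Lemma bigmin_le (I : eqType) (r : seq I) (P : pred I) (F : I -> nat) x0 i :
  i \in r -> P i -> \big[minn/x0]_(j <- r | P j) F j <= F i.
Proof.
elim: r => // j r IHr; rewrite in_cons big_cons => /predU1P[-> ->|ir Pi]; first exact: geq_minl.
by case: (P j); [apply: leq_trans (geq_minr _ _) _|]; apply: IHr.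
Qed.

Definition pentagon (X : Type) (r : rel X) (x1 x2 x3 x4 x5 : X) : bool :=
  [&& r x1 x2, r x2 x3, r x3 x4, r x4 x5 & r x5 x1] &&
  ~~ [|| r x1 x3, r x2 x4, r x3 x5, r x4 x1 | r x5 x2].

Lemma pentagon_rot (X : Type) (r : rel X) x1 x2 x3 x4 x5 :
  pentagon r x1 x2 x3 x4 x5 -> pentagon r x2 x3 x4 x5 x1.
Proof.
by rewrite /pentagon !negb_or => /andP[/and5P[-> -> -> -> ->]] /and5P[-> -> -> -> ->].
Qed.

Lemma pentagon_proper (X : eqType) (r : rel X) x1 x2 x3 x4 x5 :
  pentagon r x1 x2 x3 x4 x5 -> pentagon (fun x y => (x != y) && r x y) x1 x2 x3 x4 x5.
Proof.
rewrite /pentagon !negb_or => /andP[/and5P[r12 r23 r34 r45 r51] /and5P[n13 n24 n35 n41 n52]].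
rewrite r12 r23 r34 r45 r51 (negPf n13) (negPf n24) (negPf n35) (negPf n41) (negPf n52).
rewrite !andbF !andbT.
by apply/and5P; split; [apply: contraNneq n13 | apply: contraNneq n24 | apply: contraNneq n35 |
  apply: contraNneq n41 | apply: contraNneq n52] => ->.
Qed.

Lemma pentagon_map (X Y : Type) (D : pred X) (r : rel X) (r' : rel Y) (f : X -> Y)
    x1 x2 x3 x4 x5 :
  {in D &, forall x y, r' (f x) (f y) = r x y} -> all D [:: x1; x2; x3; x4; x5] ->
  pentagon r x1 x2 x3 x4 x5 -> pentagon r' (f x1) (f x2) (f x3) (f x4) (f x5).
Proof. by move=> f_rel /and5P[D1 D2 D3 D4 /andP[D5 _]]; rewrite /pentagon !f_rel. Qed.

Lemma not_two_colorable_C5 (a b c d f k : nat) :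
  k <= 2 -> a < k -> b < k -> c < k -> d < k -> f < k ->
  a != b -> b != c -> c != d -> d != f -> f != a -> False.
Proof.
move=> k_le2; case: a => [|[|a]]; case: b => [|[|b]]; case: c => [|[|c]];
  case: d => [|[|d]]; case: f => [|[|f]] //; lia.
Qed.

Section Graph.
Variables (T : finType) (e : rel T).
Hypotheses (e_sym : symmetric e) (e_irr : irreflexive e).

Lemma colorableP (S : {set T}) k :
  reflect (exists f : T -> 'I_#|T|,
             {in S, forall x, f x < k} /\ {in S &, forall x y, e x y -> f x != f y})
          (colorable e S k).
Proof.
apply: (iffP existsP) => [[f /andP[/forall_inP f_lt /forall_inP f_prop]] | [f [f_lt f_prop]]].
  exists f; split => // x y xS yS; exact/implyP/(forall_inP (f_prop x xS)).
exists (finfun f); apply/andP; split; apply/forall_inP => x xS; rewrite ffunE; first exact: f_lt.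
by apply/forall_inP => y yS; rewrite ffunE; apply/implyP; apply: f_prop.
Qed.

Lemma colorable_le (S : {set T}) k k' : k <= k' -> colorable e S k -> colorable e S k'.
Proof.
move=> le_kk' /colorableP[f [f_lt f_prop]]; apply/colorableP; exists f; split => // x xS.
exact: leq_trans (f_lt x xS) le_kk'.
Qed.

Lemma colorable_set0 k : colorable e set0 k.
Proof. by apply/colorableP; exists (fun x => enum_rank x); split => x; rewrite inE. Qed.

Lemma clique_number_ge (S K : {set T}) :
  K \subset S -> is_clique e K -> #|K| <= clique_number e S.
Proof.
move=> KS cK.
by apply: (@leq_bigmax_cond _ (fun K => (K \in powerset S) && is_clique e K)); rewrite inE KS.
Qed.

Lemma clique_number_leP (S : {set T}) m :
  reflect (forall K : {set T}, K \subset S -> is_clique e K -> #|K| <= m)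
          (clique_number e S <= m).
Proof.
apply: (iffP idP) => [/bigmax_leqP h K KS cK | h]; first by apply: h; rewrite inE KS.
by apply/bigmax_leqP => K /andP[]; rewrite inE; apply: h.
Qed.

Lemma clique_number_le_card (S : {set T}) : clique_number e S <= #|S|.
Proof. by apply/clique_number_leP => K KS _; apply: subset_leq_card. Qed.

Lemma clique_number_le_colorable (S : {set T}) k :
  colorable e S k -> clique_number e S <= k.
Proof.
move=> /colorableP[f [f_lt f_prop]]; apply/clique_number_leP => K /subsetP KS /forallP cK.
apply: (@card_le_of_injective_below _ _ (fun x => val (f x))) => [x y xK yK /val_inj fxy|x xK].
  have [//|xy] := eqVneq x y.
  have exy : e x y by have /forall_inP/(_ y yK)/implyP := implyP (cK x) xK; apply.
  by have /eqP := f_prop x y (KS x xK) (KS y yK) exy.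
exact/f_lt/KS.
Qed.

Lemma chromatic_number_le (S : {set T}) k : colorable e S k -> chromatic_number e S <= k.
Proof.
rewrite /chromatic_number => colS; have [k_small | k_big] := leqP k #|S|.
  rewrite -ltnS in k_small.
  exact: (@bigmin_le _ _ _ (fun i : 'I_#|S|.+1 => val i) _ (Ordinal k_small) (mem_index_enum _)).
elim/big_rec: _ => [|i x _ x_lt]; first exact: ltnW.
exact: leq_trans (geq_minr _ _) x_lt.
Qed.

Lemma chromatic_number_ge (S : {set T}) m :
  m <= #|S| -> (forall k, colorable e S k -> m <= k) -> m <= chromatic_number e S.
Proof.
move=> m_le m_colS; rewrite /chromatic_number.
elim/big_ind: _ => // [x y m_x m_y | k /m_colS //]; by rewrite leq_min m_x m_y.
Qed.

Lemma clique_number_le_chromatic (S : {set T}) : clique_number e S <= chromatic_number e S.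
Proof.
by apply: chromatic_number_ge; [apply: clique_number_le_card | apply: clique_number_le_colorable].
Qed.

Lemma clique_number_mono (S S' : {set T}) :
  S' \subset S -> clique_number e S' <= clique_number e S.
Proof.
move=> S'S; apply/clique_number_leP => K KS' cK.
exact/clique_number_ge/cK/(subset_trans KS').
Qed.

Definition simplicial (S : {set T}) v :=
  {in S &, forall x y, e v x -> e v y -> x != y -> e x y}.

Definition dominated (S : {set T}) v :=
  exists2 u, u \in S & [/\ u != v, ~~ e u v & {in S, forall y, e v y -> e u y}].

Lemma simplicial_or_nonadjacent_neighbours (S : {set T}) v :
  simplicial S v \/
  exists x y, [/\ x \in S, y \in S, e v x, e v y & x != y] /\ ~~ e x y.
Proof.
have [simp|] := boolP [forall x in S, forall y in S, [&& e v x, e v y & x != y] ==> e x y].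
  left => x y xS yS vx vy xy.
  by have /forall_inP/(_ y yS)/implyP := forall_inP simp x xS; apply; rewrite vx vy xy.
rewrite negb_forall_in => /exists_inP[x xS]; rewrite negb_forall_in => /exists_inP[y yS].
by rewrite negb_imply => /andP[/and3P[vx vy xy] nxy]; right; exists x, y.
Qed.

Lemma colorable_add_simplicial (S : {set T}) v :
  v \in S -> simplicial S v ->
  colorable e (S :\ v) (clique_number e S) -> colorable e S (clique_number e S).
Proof.
move=> vS v_simp /colorableP[f [f_lt f_prop]].
set N := [set y in S | e v y].
have N_lt : #|N| < clique_number e S.
  have vN : v \notin N by rewrite inE e_irr andbF.
  have <- : #|v |: N| = #|N|.+1 by rewrite cardsU1 vN.
  apply: clique_number_ge.
    by apply/subsetP => x /setU1P[->|]; rewrite ?inE => // /andP[].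
  apply/forall_inP => x /setU1P xvN; apply/forall_inP => y /setU1P yvN.
  apply/implyP => xy; case: xvN => [xv|xN]; case: yvN => [yv|yN].
  - by rewrite xv yv eqxx in xy.
  - by move: yN; rewrite xv inE => /andP[].
  - by move: xN; rewrite yv inE e_sym => /andP[].
  - by move: xN yN; rewrite !inE => /andP[xS vx] /andP[yS vy]; apply: v_simp.
have [c c_lt c_fresh] := exists_fresh_below (fun x => val (f x)) N_lt.
have c_T : c < #|T|.
  exact: leq_trans c_lt (leq_trans (clique_number_le_card S) (max_card _)).
have S'x x : x \in S -> x != v -> x \in S :\ v by move=> xS xv; rewrite !inE xv.
apply/colorableP; exists (fun x => if x == v then Ordinal c_T else f x); split.
  move=> x xS; case: eqP => [//|/eqP xv]; exact: leq_trans (f_lt _ (S'x x xS xv)) _.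
have fresh x : x \in S -> e v x -> f x != Ordinal c_T.
  by move=> xS vx; rewrite -(inj_eq val_inj) c_fresh // inE xS.
move=> x y xS yS exy; case: (eqVneq x v) => [xv|xv]; case: (eqVneq y v) => [yv|yv].
- by rewrite xv yv e_irr in exy.
- by rewrite eq_sym fresh // -xv.
- by rewrite fresh // -yv e_sym.
- exact: f_prop (S'x x xS xv) (S'x y yS yv) exy.
Qed.

Lemma colorable_add_dominated (S : {set T}) v k :
  v \in S -> dominated S v -> colorable e (S :\ v) k -> colorable e S k.
Proof.
move=> vS [u uS [uv nuv v_sub_u]] /colorableP[f [f_lt f_prop]].
have S'x x : x \in S -> x != v -> x \in S :\ v by move=> xS xv; rewrite !inE xv.
have uS' := S'x u uS uv.
have fu_fresh y : y \in S -> e v y -> f u != f y.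
  move=> yS vy; have yv : y != v by apply: contraTneq vy => ->; rewrite e_irr.
  exact: f_prop uS' (S'x y yS yv) (v_sub_u y yS vy).
apply/colorableP; exists (fun x => if x == v then f u else f x); split.
  by move=> x xS; case: eqP => [_|/eqP xv]; [apply: f_lt | apply/f_lt/S'x].
move=> x y xS yS exy; case: (eqVneq x v) => [xv|xv]; case: (eqVneq y v) => [yv|yv].
- by rewrite xv yv e_irr in exy.
- by apply: fu_fresh; rewrite // -xv.
- by rewrite eq_sym; apply: fu_fresh; rewrite // -yv e_sym.
- exact: f_prop (S'x x xS xv) (S'x y yS yv) exy.
Qed.

Lemma perfect_of_simplicial_or_dominated (V : {set T}) :
  (forall S : {set T}, S \subset V -> S != set0 ->
     exists2 v, v \in S & simplicial S v \/ dominated S v) ->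
  perfect e V.
Proof.
move=> V_red; suff colS (S : {set T}) : S \subset V -> colorable e S (clique_number e S).
  move=> S SV; apply/eqP; rewrite eqn_leq clique_number_le_chromatic /=.
  exact/chromatic_number_le/colS.
elim: {S}_.+1 {-2}S (ltnSn #|S|) => // m IHm S S_le SV.
have [->|S_ne0] := eqVneq S set0; first exact: colorable_set0.
have [v vS v_red] := V_red S SV S_ne0.
have S'S : S :\ v \subset S by apply: subsetDl.
have S'_le : #|S :\ v| < m by rewrite -ltnS (leq_trans _ S_le) // ltnS (cardsD1 v S) vS.
have colS' := colorable_le (clique_number_mono S'S) (IHm _ S'_le (subset_trans S'S SV)).
case: v_red => [v_simp | v_dom]; first exact: colorable_add_simplicial vS v_simp colS'.
exact: colorable_add_dominated vS v_dom colS'.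
Qed.

Lemma not_perfect_pentagon (V : {set T}) x1 x2 x3 x4 x5 :
  x1 \in V -> x2 \in V -> x3 \in V -> x4 \in V -> x5 \in V ->
  pentagon e x1 x2 x3 x4 x5 -> ~ perfect e V.
Proof.
move=> x1V x2V x3V x4V x5V /andP[/and5P[e12 e23 e34 e45 e51]].
rewrite !negb_or => /and5P[/negPf n13 /negPf n24 /negPf n35 /negPf n41 /negPf n52].
have flip x y : e x y = false -> e y x = false by rewrite e_sym.
have n31 := flip _ _ n13; have n42 := flip _ _ n24; have n53 := flip _ _ n35.
have n14 := flip _ _ n41; have n25 := flip _ _ n52.
set S := [set x1; x2; x3; x4; x5].
have SV : S \subset V.
  by apply/subsetP => x; rewrite !inE => /orP[/orP[/orP[/orP[]|]|]|] /eqP->.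
have omega_le2 : clique_number e S <= 2.
  apply/clique_number_leP => K /subsetP KS /forallP cK; rewrite leqNgt.
  apply/card_gt2P => -[x [y [z [[xK yK zK] [xy yz zx]]]]].
  have adj u v : u \in K -> v \in K -> u != v -> e u v.
    by move=> uK vK uv; have /forall_inP/(_ v vK)/implyP := implyP (cK u) uK; apply.
  have : [&& e x y, e y z & e x z] by rewrite !adj // eq_sym.
  move: (KS x xK) (KS y yK) (KS z zK); rewrite !inE.
  by do 3!case/orP=> [/orP[/orP[/orP[]|]|]|] /eqP->;
    rewrite ?e_irr ?n13 ?n24 ?n35 ?n41 ?n52 ?n31 ?n42 ?n53 ?n14 ?n25 ?andbF.
have chi_ge3 : 3 <= chromatic_number e S.
  apply: chromatic_number_ge => [|k /colorableP[f [f_lt f_prop]]].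
    apply/card_gt2P; exists x1, x2, x3; rewrite !inE !eqxx ?orbT; split => //.
    split; first by apply: contraTneq e12 => ->; rewrite e_irr.
      by apply: contraTneq e23 => ->; rewrite e_irr.
    by apply: contraTneq e34 => ->; rewrite n14.
  rewrite leqNgt; apply/negP => k_le2.
  have xS : [/\ x1 \in S, x2 \in S, x3 \in S, x4 \in S & x5 \in S] by rewrite !inE !eqxx ?orbT.
  case: xS => x1S x2S x3S x4S x5S.
  have fne x y : x \in S -> y \in S -> e x y -> val (f x) != val (f y).
    by move=> xS yS /(f_prop x y xS yS); rewrite (inj_eq val_inj).
  exact: (not_two_colorable_C5 k_le2 (f_lt _ x1S) (f_lt _ x2S) (f_lt _ x3S) (f_lt _ x4S)
    (f_lt _ x5S) (fne _ _ x1S x2S e12) (fne _ _ x2S x3S e23) (fne _ _ x3S x4S e34)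
    (fne _ _ x4S x5S e45) (fne _ _ x5S x1S e51)).
move=> /(_ S SV) omega_chi.
by move: chi_ge3; rewrite -omega_chi leqNgt ltnS omega_le2.
Qed.

End Graph.

(** * Annihilators of divisors *)

Definition ann (m u : nat) : pred nat := [pred v | m %| u * v].

Definition ann_chain (m : nat) :=
  forall u u', 0 < u -> 0 < u' -> ~~ (m %| u * u') ->
  {subset ann m u <= ann m u'} \/ {subset ann m u' <= ann m u}.

(* Think of a as a vertex of least weight and of b, c as two non-adjacent neighbours of a: one of
   them must then dominate the other among the vertices of weight at least w a. *)
Definition nested_at_min_weight (n : nat) (w : nat -> nat) :=
  forall a b c, 0 < a -> 0 < b -> 0 < c -> w a <= w b -> w a <= w c ->
  n %| a * b -> n %| a * c -> ~~ (n %| b * c) ->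
  (forall y, 0 < y -> w a <= w y -> n %| b * y -> n %| c * y) \/
  (forall y, 0 < y -> w a <= w y -> n %| c * y -> n %| b * y).

Lemma coprime_primes p q : prime p -> prime q -> p != q -> coprime p q.
Proof. by move=> p_pr q_pr pq; rewrite prime_coprime // dvdn_prime2. Qed.

Lemma ann_chain1 : ann_chain 1.
Proof. by move=> u u' _ _; rewrite dvd1n. Qed.

Lemma ann_chain_prime_pow q b : prime q -> ann_chain (q ^ b).
Proof.
move=> q_pr u u' u_gt0 u'_gt0 _.
have sub_ann u1 u2 : 0 < u1 -> 0 < u2 -> logn q u1 <= logn q u2 ->
    {subset ann (q ^ b) u1 <= ann (q ^ b) u2}.
  move=> u1_gt0 u2_gt0 le_u12 [|v]; rewrite !inE ?muln0 ?dvdn0 //.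
  rewrite !pfactor_dvdn ?muln_gt0 ?u1_gt0 ?u2_gt0 //.
  by rewrite !lognM // => /leq_trans; apply; rewrite leq_add2r.
by case: (leqP (logn q u) (logn q u')) => [|/ltnW] le_u; [left | right]; apply: sub_ann.
Qed.

Lemma ann_chain_prime_mul q r : prime q -> prime r -> q != r -> ann_chain (q * r).
Proof.
move=> q_pr r_pr qr u u' _ _.
have dvd_qr X : (q * r %| X) = (q %| X) && (r %| X) by rewrite Gauss_dvd ?coprime_primes.
have nested (A B C D : bool) : ~~ ((A || C) && (B || D)) ->
    (forall x y, (A || x) && (B || y) -> (C || x) && (D || y)) \/
    (forall x y, (C || x) && (D || y) -> (A || x) && (B || y)).
  by case: A; case: B; case: C; case: D => //= _;
    first [left; by case; case | right; by case; case].
rewrite dvd_qr !Euclid_dvdM // => /nested[sub|sub]; [left|right] => v;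
  by rewrite !inE !dvd_qr !Euclid_dvdM //; apply: sub.
Qed.

Lemma nested_at_min_weight_pow_mul p k m :
  prime p -> coprime (p ^ k) m -> ann_chain m -> nested_at_min_weight (p ^ k * m) (logn p).
Proof.
move=> p_pr pk_m m_chain a b c a_gt0 b_gt0 c_gt0 ab_w ac_w.
have dvd_n X : (p ^ k * m %| X) = (p ^ k %| X) && (m %| X) by rewrite Gauss_dvd.
have dvd_pk u v : 0 < u -> 0 < v -> (p ^ k %| u * v) = (k <= logn p u + logn p v).
  by move=> u_gt0 v_gt0; rewrite pfactor_dvdn ?muln_gt0 ?u_gt0 // lognM.
have pk_le u v : 0 < u -> 0 < v -> p ^ k %| a * u -> logn p a <= logn p v -> p ^ k %| u * v.
  move=> u_gt0 v_gt0; rewrite !dvd_pk // => k_le le_av.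
  by rewrite (leq_trans k_le) // addnC leq_add2l.
rewrite !dvd_n => /andP[pk_ab _] /andP[pk_ac _]; rewrite pk_le //= => m_bc.
have dom u u' : 0 < u' -> p ^ k %| a * u' -> {subset ann m u <= ann m u'} ->
    forall y, 0 < y -> logn p a <= logn p y -> p ^ k * m %| u * y -> p ^ k * m %| u' * y.
  move=> u'_gt0 pk_au' sub y y_gt0 le_ay; rewrite !dvd_n => /andP[_ m_uy].
  by rewrite pk_le //=; apply: (sub y).
by case: (m_chain b c b_gt0 c_gt0 m_bc) => sub; [left | right]; apply: dom.
Qed.

(* Let A', B', C' be the sets of p_i not dividing a, b, c. Then A' misses B' and C', the sets
   B' and C' meet, and |B'|, |C'| <= |A'|; if B' and C' were incomparable we would get
   |A'| >= 2 and |B' U C'| >= 3, which is too many for four primes. *)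
Lemma nested_bool4 (a1 a2 a3 a4 b1 b2 b3 b4 c1 c2 c3 c4 : bool) :
  [&& a1 || b1, a2 || b2, a3 || b3 & a4 || b4] ->
  [&& a1 || c1, a2 || c2, a3 || c3 & a4 || c4] ->
  ~~ [&& b1 || c1, b2 || c2, b3 || c3 & b4 || c4] ->
  count id [:: a1; a2; a3; a4] <= count id [:: b1; b2; b3; b4] ->
  count id [:: a1; a2; a3; a4] <= count id [:: c1; c2; c3; c4] ->
  [&& b1 ==> c1, b2 ==> c2, b3 ==> c3 & b4 ==> c4] ||
  [&& c1 ==> b1, c2 ==> b2, c3 ==> b3 & c4 ==> b4].
Proof.
by case: a1; case: a2; case: a3; case: a4; case: b1; case: b2; case: b3; case: b4;
  case: c1; case: c2; case: c3; case: c4.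
Qed.

Lemma nested_at_min_weight_sqfree4 p1 p2 p3 p4 :
  prime p1 -> prime p2 -> prime p3 -> prime p4 -> uniq [:: p1; p2; p3; p4] ->
  nested_at_min_weight (p1 * p2 * p3 * p4) (fun u => count (dvdn^~ u) [:: p1; p2; p3; p4]).
Proof.
move=> p1_pr p2_pr p3_pr p4_pr /and4P[]; rewrite !inE !negb_or.
move=> /and3P[p12 p13 p14] /andP[p23 p24] p34 _.
have dvd_n X : (p1 * p2 * p3 * p4 %| X) = [&& p1 %| X, p2 %| X, p3 %| X & p4 %| X].
  by rewrite !Gauss_dvd ?coprimeMl ?coprime_primes // -!andbA.
have dvd_nM u v : (p1 * p2 * p3 * p4 %| u * v) = [&& (p1 %| u) || (p1 %| v),
    (p2 %| u) || (p2 %| v), (p3 %| u) || (p3 %| v) & (p4 %| u) || (p4 %| v)].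
  by rewrite dvd_n !Euclid_dvdM.
have mono (x x' z : bool) : x ==> x' -> x || z -> x' || z by case: x; case: x'.
move=> a b c _ _ _ ab_w ac_w; rewrite !dvd_nM => ab ac bc.
case/orP: (nested_bool4 ab ac bc ab_w ac_w) => /and4P[i1 i2 i3 i4]; [left | right];
  move=> y _ _; rewrite !dvd_nM => /and4P[y1 y2 y3 y4];
  by rewrite (mono _ _ _ i1 y1) (mono _ _ _ i2 y2) (mono _ _ _ i3 y3) (mono _ _ _ i4 y4).
Qed.

Lemma pentagon_nontrivial n d1 d2 d3 d4 d5 :
  pentagon (fun d d' => n %| d * d') d1 d2 d3 d4 d5 ->
  all (fun d => (d != 1) && (d != n)) [:: d1; d2; d3; d4; d5].
Proof.
have nontrivial x1 x2 x3 x4 x5 :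
    pentagon (fun d d' => n %| d * d') x1 x2 x3 x4 x5 -> (x1 != 1) && (x1 != n).
  rewrite /pentagon !negb_or => /andP[/and5P[_ _ _ _ n51] /and5P[n13 _ _ _ n52]].
  apply/andP; split; last by apply: contraNneq n13 => ->; rewrite dvdn_mulr.
  by apply: contraNneq n52 => x1E; rewrite (dvdn_trans (_ : n %| x5 * x1)) // x1E muln1 dvdn_mulr.
move=> p1; have p2 := pentagon_rot p1; have p3 := pentagon_rot p2; have p4 := pentagon_rot p3.
by rewrite /= (nontrivial _ _ _ _ _ p1) (nontrivial _ _ _ _ _ p2) (nontrivial _ _ _ _ _ p3)
  (nontrivial _ _ _ _ _ p4) (nontrivial _ _ _ _ _ (pentagon_rot p4)).
Qed.

Section DivisorLabelling.
Variables (T : finType) (e : rel T) (V : {set T}) (n : nat) (d : T -> nat).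
Hypothesis e_div : {in V &, forall x y, e x y = (x != y) && (n %| d x * d y)}.
Hypothesis d_gt0 : {in V, forall x, 0 < d x}.

Lemma dominated_of_ann_sub (S : {set T}) q q' :
  S \subset V -> q \in S -> q' \in S -> q != q' -> ~~ e q q' ->
  {in S, forall y, n %| d q * d y -> n %| d q' * d y} -> dominated e S q.
Proof.
move=> /subsetP SV qS q'S qq' nqq' sub; exists q' => //.
have q'q : q' != q by rewrite eq_sym.
split=> //; first by move: nqq'; rewrite !e_div ?SV // qq' q'q mulnC.
move=> y yS; rewrite !e_div ?SV // => /andP[qy n_qy]; rewrite sub // andbT.
by apply: contraNneq nqq' => ->; rewrite e_div ?SV // qy.
Qed.

Lemma simplicial_or_dominated_of_weight (w : nat -> nat) :
  nested_at_min_weight n w ->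
  forall S : {set T}, S \subset V -> S != set0 ->
  exists2 v, v \in S & simplicial e S v \/ dominated e S v.
Proof.
move=> w_nested S SV /set0Pn[x0 x0S]; have d_gt0S x : x \in S -> 0 < d x.
  by move=> xS; apply/d_gt0/(subsetP SV).
have e_divS : {in S &, forall x y, e x y = (x != y) && (n %| d x * d y)}.
  by move=> x y xS yS; apply: e_div; apply: (subsetP SV).
case: (@arg_minnP _ x0 (mem S) (fun x => w (d x)) x0S) => v vS v_min.
have [v_simp|[q [q' [[qS q'S vq vq' qq'] nqq']]]] := @simplicial_or_nonadjacent_neighbours _ e S v.
  by exists v; first exact: vS; left.
move: vq vq' (nqq'); rewrite !e_divS ?qq' //= => /andP[_ n_vq] /andP[_ n_vq'] n_qq'.
have [sub|sub] := w_nested _ _ _ (d_gt0S v vS) (d_gt0S q qS) (d_gt0S q' q'S)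
  (v_min q qS) (v_min q' q'S) n_vq n_vq' n_qq'.
  exists q => //; right; apply: (@dominated_of_ann_sub _ q q') => // y yS.
  by apply: sub; [apply: d_gt0S | apply: v_min].
exists q' => //; right; apply: (@dominated_of_ann_sub _ q' q) => //; first by rewrite eq_sym.
  by rewrite e_divS // eq_sym qq' mulnC.
by move=> y yS; apply: sub; [apply: d_gt0S | apply: v_min].
Qed.

End DivisorLabelling.

(** * The annihilating-ideal graph of Z_n *)

Section IdealsOfRing.
Variable R : finComNzRingType.
Local Open Scope ring_scope.

Lemma ideal_closed (I : {set R}) :
  is_ideal I -> {in I &, forall x y, x - y \in I} /\ forall r, {in I, forall x, r * x \in I}.
Proof.
case/and3P=> _ /forall_inP I_add /forallP I_mul.
have mul r : {in I, forall x, r * x \in I} by apply/forall_inP/I_mul.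
split=> // x y xI yI; rewrite -mulN1r.
by move/forall_inP: (I_add x xI); apply; apply: mul.
Qed.

Lemma ideal_prod_zeroC (I J : {set R}) : ideal_prod_zero I J = ideal_prod_zero J I.
Proof.
apply/forall_inP/forall_inP => IJ y yJ; apply/forall_inP => x xI; rewrite mulrC;
  exact: (forall_inP (IJ x xI)).
Qed.

Lemma AG_adj_sym : symmetric (@AG_adj R).
Proof. by move=> I J; rewrite /AG_adj eq_sym ideal_prod_zeroC. Qed.

Lemma AG_adj_irr : irreflexive (@AG_adj R).
Proof. by move=> I; rewrite /AG_adj eqxx. Qed.

End IdealsOfRing.

Section IdealsOfZn.
Variable n : nat.
Hypothesis n_gt1 : 1 < n.
Local Notation R := ('Z_n : finComNzRingType).
Local Notation V := (AG_vertices R).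

Lemma Zp_val_lt (x : R) : x < n.
Proof. by rewrite -[n in _ < n](Zp_cast n_gt1). Qed.

Lemma dvdn_modn_n d k : d %| n -> (d %| k %% n) = (d %| k).
Proof. by move=> dn; rewrite /dvdn modn_dvdm. Qed.

Definition multiples (d : nat) : {set R} := [set x : R | d %| x].

Definition ideal_gen (I : {set R}) : nat := \big[gcdn/n]_(x in I) x.

Lemma natr_in_multiples d k : d %| n -> (((k%:R)%R : R) \in multiples d) = (d %| k).
Proof. by move=> dn; rewrite inE val_Zp_nat // dvdn_modn_n. Qed.

Lemma multiples_ideal d : d %| n -> is_ideal (multiples d).
Proof.
move=> dn; apply/and3P; split; first by rewrite inE dvdn0.
  apply/forall_inP => x; rewrite inE => dx; apply/forall_inP => y; rewrite inE => dy.
  by rewrite -(natr_Zp x) -(natr_Zp y) -natrD natr_in_multiples // dvdn_add.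
apply/forallP => r; apply/forall_inP => x; rewrite inE => dx.
by rewrite -(natr_Zp x) -(natr_Zp r) -natrM natr_in_multiples // dvdn_mull.
Qed.

Lemma ideal_gen_dvdn (I : {set R}) : ideal_gen I %| n.
Proof.
by rewrite /ideal_gen; elim/big_rec: _ => // x k _; apply: dvdn_trans (dvdn_gcdr _ _).
Qed.

Lemma ideal_gen_dvd (I : {set R}) x : x \in I -> ideal_gen I %| x.
Proof. by move=> xI; rewrite /ideal_gen (bigD1 x) //= dvdn_gcdl. Qed.

(* Closure of I under gcd is Bezout's identity. *)
Lemma natr_ideal_gen_in (I : {set R}) : is_ideal I -> ((ideal_gen I)%:R)%R \in I.
Proof.
move=> I_ideal; have [I_sub I_mul] := ideal_closed I_ideal.
rewrite /ideal_gen; elim/big_ind: _ => [|a b aI bI|x xI]; last by rewrite natr_Zp.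
- by rewrite pchar_Zp //; case/and3P: I_ideal.
- have [->|a_gt0] := posnP a; first by rewrite gcd0n.
  have [ka kb kab _] := egcdnP b a_gt0.
  have -> : ((gcdn a b)%:R = ka%:R * a%:R - kb%:R * b%:R :> R)%R.
    by rewrite -!natrM kab natrD addrC addKr.
  by apply: I_sub; apply: I_mul.
Qed.

Lemma ideal_multiples_gen (I : {set R}) : is_ideal I -> I = multiples (ideal_gen I).
Proof.
move=> I_ideal; apply/setP => x; rewrite inE; apply/idP/idP; first exact: ideal_gen_dvd.
case/dvdnP => k xE; rewrite -(natr_Zp x) xE natrM.
by apply: (ideal_closed I_ideal).2; apply: natr_ideal_gen_in.
Qed.

Lemma multiples_n : multiples n = [set 0%R].
Proof.
by apply/setP => x; rewrite !inE -(inj_eq val_inj) /= /dvdn modn_small ?Zp_val_lt.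
Qed.

Lemma multiples_inj d d' : d %| n -> d' %| n -> multiples d = multiples d' -> d = d'.
Proof.
have sub a b : a %| n -> b %| n -> multiples a = multiples b -> b %| a.
  by move=> an bn Mab; rewrite -(natr_in_multiples _ bn) -Mab natr_in_multiples.
by move=> dn d'n Md; apply/eqP; rewrite eqn_dvd (sub d d') // (sub d' d).
Qed.

Lemma ideal_gen_multiples d : d %| n -> ideal_gen (multiples d) = d.
Proof.
move=> dn; apply: (multiples_inj (ideal_gen_dvdn _) dn).
by rewrite -ideal_multiples_gen ?multiples_ideal.
Qed.

Lemma zero_ideal_multiples d : d %| n -> zero_ideal (multiples d) = (d == n).
Proof.
move=> dn; rewrite /zero_ideal -multiples_n.
by apply/eqP/eqP => [|-> //]; apply: multiples_inj.
Qed.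

Lemma ideal_prod_zero_multiples d d' : d %| n -> d' %| n ->
  ideal_prod_zero (multiples d) (multiples d') = (n %| d * d').
Proof.
move=> dn d'n; apply/forall_inP/idP => [prod0 | n_dd' x].
  have dM : (d%:R)%R \in multiples d by rewrite natr_in_multiples.
  have d'M : (d'%:R)%R \in multiples d' by rewrite natr_in_multiples.
  have := forall_inP (prod0 _ dM) _ d'M.
  by rewrite -natrM -(inj_eq val_inj) /= val_Zp_nat.
rewrite inE => dx; apply/forall_inP => y; rewrite inE => d'y.
rewrite -(natr_Zp x) -(natr_Zp y) -natrM -(inj_eq val_inj) /= val_Zp_nat //.
by rewrite -/(dvdn n _) (dvdn_trans n_dd') // dvdn_mul.
Qed.

Lemma AG_adj_multiples d d' : d %| n -> d' %| n ->
  AG_adj (multiples d) (multiples d') = (d != d') && (n %| d * d').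
Proof.
move=> dn d'n; rewrite /AG_adj ideal_prod_zero_multiples //; congr (~~ _ && _).
by apply/eqP/eqP => [/(multiples_inj dn d'n) | ->].
Qed.

Lemma in_AG_vertices (I : {set R}) : (I \in V) = is_ideal I && (1 < ideal_gen I < n).
Proof.
rewrite inE; have [I_ideal|] //= := boolP (is_ideal I).
have gn := ideal_gen_dvdn I; have g_gt0 : 0 < ideal_gen I := dvdn_gt0 (ltnW n_gt1) gn.
have IE := ideal_multiples_gen I_ideal; set g := ideal_gen I in gn g_gt0 IE *.
rewrite IE zero_ideal_multiples //.
apply/andP/andP => [[g_ne_n /existsP[J /and3P[J_ideal J_ne0 IJ]]] | [g_gt1 g_lt_n]].
  move: J_ne0 IJ; rewrite (ideal_multiples_gen J_ideal).
  have g'n := ideal_gen_dvdn J; rewrite zero_ideal_multiples // ideal_prod_zero_multiples //.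
  move=> g'_ne_n n_gg'; split; last by rewrite ltn_neqAle g_ne_n dvdn_leq // ltnW.
  rewrite ltn_neqAle g_gt0 andbT eq_sym; apply: contra g'_ne_n => /eqP g1.
  by rewrite eqn_dvd g'n -[ideal_gen J]mul1n -g1.
split; first by rewrite ltn_eqF.
have ndg : n %/ g %| n by apply: dvdn_div.
apply/existsP; exists (multiples (n %/ g)).
rewrite multiples_ideal // zero_ideal_multiples // ideal_prod_zero_multiples //.
by rewrite mulnC divnK // dvdnn andbT ltn_eqF // ltn_Pdiv // ltnW.
Qed.

Lemma AG_adj_vertices :
  {in V &, forall I J, AG_adj I J = (I != J) && (n %| ideal_gen I * ideal_gen J)}.
Proof.
move=> I J; rewrite !in_AG_vertices => /andP[I_ideal _] /andP[J_ideal _].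
by rewrite /AG_adj -ideal_prod_zero_multiples ?ideal_gen_dvdn // -!ideal_multiples_gen.
Qed.

Lemma ideal_gen_gt0 : {in V, forall I, 0 < ideal_gen I}.
Proof. by move=> I; rewrite in_AG_vertices => /and3P[_ /ltnW]. Qed.

Lemma multiples_in_AG_vertices d : d %| n -> d != 1 -> d != n -> multiples d \in V.
Proof.
move=> dn d_ne1 d_nen; have d_gt0 := dvdn_gt0 (ltnW n_gt1) dn.
rewrite in_AG_vertices multiples_ideal // ideal_gen_multiples //=; apply/andP; split.
  by rewrite ltn_neqAle eq_sym d_ne1.
by rewrite ltn_neqAle d_nen dvdn_leq // ltnW.
Qed.

Lemma AG_perfect_of_nested w : nested_at_min_weight n w -> perfect (@AG_adj R) V.
Proof.
move=> w_nested.
apply: perfect_of_simplicial_or_dominated; [exact: AG_adj_sym | exact: AG_adj_irr |].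
exact (simplicial_or_dominated_of_weight AG_adj_vertices ideal_gen_gt0 w_nested).
Qed.

Lemma AG_not_perfect_of_pentagon d1 d2 d3 d4 d5 :
  all (dvdn^~ n) [:: d1; d2; d3; d4; d5] ->
  pentagon (fun d d' => n %| d * d') d1 d2 d3 d4 d5 -> ~ perfect (@AG_adj R) V.
Proof.
move=> ds pent; have /and5P[d1n d2n d3n d4n /andP[d5n _]] := ds.
have /and5P[nt1 nt2 nt3 nt4 /andP[nt5 _]] := pentagon_nontrivial pent.
have vert d : d %| n -> (d != 1) && (d != n) -> multiples d \in V.
  by move=> dn /andP[]; apply: multiples_in_AG_vertices.
apply (not_perfect_pentagon (@AG_adj_sym R) (@AG_adj_irr R) (vert _ d1n nt1) (vert _ d2n nt2)
  (vert _ d3n nt3) (vert _ d4n nt4) (vert _ d5n nt5)).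
apply: (pentagon_map (D := dvdn^~ n)) ds (pentagon_proper pent) => d d' dn d'n.
exact: AG_adj_multiples.
Qed.

End IdealsOfZn.

(** * Pentagons and the classification *)

Definition divisor_pentagon (n : nat) :=
  exists d1 d2 d3 d4 d5, all (dvdn^~ n) [:: d1; d2; d3; d4; d5] /\
                         pentagon (fun d d' => n %| d * d') d1 d2 d3 d4 d5.

Lemma dvdn_mul_codivisors n c c' : 0 < n -> c %| n -> c' %| n ->
  (n %| n %/ c * (n %/ c')) = (c * c' %| n).
Proof.
move=> n_gt0 cn c'n; have c_gt0 := dvdn_gt0 n_gt0 cn; have c'_gt0 := dvdn_gt0 n_gt0 c'n.
rewrite -(@dvdn_pmul2r (c * c')) ?muln_gt0 ?c_gt0 // mulnACA !divnK //.
by rewrite dvdn_pmul2l.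
Qed.

Lemma divisor_pentagon_of_codivisors n c1 c2 c3 c4 c5 : 0 < n ->
  pentagon (fun c c' => c * c' %| n) c1 c2 c3 c4 c5 -> divisor_pentagon n.
Proof.
move=> n_gt0 pent; have /andP[/and5P[c12 c23 c34 c45 c51] _] := pent.
have cs : all (dvdn^~ n) [:: c1; c2; c3; c4; c5].
  have dvd_l x y : x * y %| n -> x %| n by apply: dvdn_trans; apply: dvdn_mulr.
  by rewrite /= (dvd_l _ _ c12) (dvd_l _ _ c23) (dvd_l _ _ c34) (dvd_l _ _ c45) (dvd_l _ _ c51).
exists (n %/ c1), (n %/ c2), (n %/ c3), (n %/ c4), (n %/ c5); split.
  by case/and5P: (cs) => c1n c2n c3n c4n /andP[c5n _]; rewrite /= !dvdn_div.
by apply: (pentagon_map (D := dvdn^~ n)) cs pent => c c' cn c'n; apply: dvdn_mul_codivisors.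
Qed.

Definition pfactors (ps es : seq nat) : nat := \prod_(k <- zip ps es) k.1 ^ k.2.

Lemma coprime_pfactors q ps es :
  prime q -> q \notin ps -> all prime ps -> coprime q (pfactors ps es).
Proof.
move=> q_pr; elim: ps es => [|p ps IHps] [|x es]; rewrite /pfactors /= ?big_nil ?coprimen1 //.
rewrite big_cons inE negb_or => /andP[qp q_ps] /andP[p_pr ps_pr].
by rewrite coprimeMr IHps // andbT coprimeXr // coprime_primes.
Qed.

Lemma pfactors_dvdn n ps es : 0 < n -> all prime ps -> uniq ps ->
  (pfactors ps es %| n) = all (fun k => k.2 <= logn k.1 n) (zip ps es).
Proof.
move=> n_gt0; elim: ps es => [|p ps IHps] [|x es]; rewrite /pfactors /= ?big_nil ?dvd1n //.
move=> /andP[p_pr ps_pr] /andP[p_ps ps_uniq].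
rewrite big_cons Gauss_dvd ?coprimeXl ?coprime_pfactors //.
by rewrite pfactor_dvdn // -IHps.
Qed.

Lemma pfactorsM ps es es' : size es = size ps -> size es' = size ps ->
  pfactors ps es * pfactors ps es' = pfactors ps [seq x.1 + x.2 | x <- zip es es'].
Proof.
elim: ps es es' => [|p ps IHps] [|x es] [|y es'] //=; rewrite /pfactors /= ?big_nil //.
by move=> [size_es] [size_es']; rewrite !big_cons /= expnD mulnACA; congr (_ * _); apply: IHps.
Qed.

Lemma divisor_pentagon_221 n p q r : 0 < n -> all prime [:: p; q; r] -> uniq [:: p; q; r] ->
  2 <= logn p n -> 2 <= logn q n -> 1 <= logn r n -> divisor_pentagon n.
Proof.
move=> n_gt0 pr uniq_pqr hp hq hr; set ps := [:: p; q; r].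
apply: (@divisor_pentagon_of_codivisors n (pfactors ps [:: logn p n; 0; 0])
  (pfactors ps [:: 0; logn q n; 0]) (pfactors ps [:: 1; 0; logn r n]) (pfactors ps [:: 1; 1; 0])
  (pfactors ps [:: 0; 1; logn r n])) => //.
by rewrite /pentagon !pfactorsM // !pfactors_dvdn //=; lia.
Qed.

Lemma divisor_pentagon_2111 n p q r s : 0 < n -> all prime [:: p; q; r; s] ->
  uniq [:: p; q; r; s] -> 2 <= logn p n -> 1 <= logn q n -> 1 <= logn r n -> 1 <= logn s n ->
  divisor_pentagon n.
Proof.
move=> n_gt0 pr uniq_pqrs hp hq hr hs; set ps := [:: p; q; r; s].
apply: (@divisor_pentagon_of_codivisors n (pfactors ps [:: logn p n; 0; 0; 0])
  (pfactors ps [:: 0; logn q n; logn r n; 0]) (pfactors ps [:: 1; 0; 0; logn s n])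
  (pfactors ps [:: 1; logn q n; 0; 0]) (pfactors ps [:: 0; 0; logn r n; logn s n])) => //.
by rewrite /pentagon !pfactorsM // !pfactors_dvdn //=; lia.
Qed.

Lemma divisor_pentagon_11111 n p q r s t : 0 < n -> all prime [:: p; q; r; s; t] ->
  uniq [:: p; q; r; s; t] -> 1 <= logn p n -> 1 <= logn q n -> 1 <= logn r n ->
  1 <= logn s n -> 1 <= logn t n -> divisor_pentagon n.
Proof.
move=> n_gt0 pr uniq_ps hp hq hr hs ht; set ps := [:: p; q; r; s; t].
apply: (@divisor_pentagon_of_codivisors n (pfactors ps [:: logn p n; logn q n; 0; 0; 0])
  (pfactors ps [:: 0; 0; logn r n; logn s n; 0]) (pfactors ps [:: logn p n; 0; 0; 0; logn t n])
  (pfactors ps [:: 0; logn q n; logn r n; 0; 0])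
  (pfactors ps [:: 0; 0; 0; logn s n; logn t n])) => //.
by rewrite /pentagon !pfactorsM // !pfactors_dvdn //=; lia.
Qed.

Definition perfect_shape (n : nat) : Prop :=
  ((exists p1 a1, prime p1 /\ (1 <= a1)%N /\ n = p1 ^ a1) \/
   (exists p1 p2 a1 a2, prime p1 /\ prime p2 /\ p1 != p2 /\ (1 <= a1)%N /\ (1 <= a2)%N /\
                        n = p1 ^ a1 * p2 ^ a2) \/
   (exists p1 p2 p3 a1, prime p1 /\ prime p2 /\ prime p3 /\ uniq [:: p1; p2; p3] /\
                        (1 <= a1)%N /\ n = p1 ^ a1 * p2 * p3) \/
   (exists p1 p2 p3 p4, prime p1 /\ prime p2 /\ prime p3 /\ prime p4 /\
                        uniq [:: p1; p2; p3; p4] /\ n = p1 * p2 * p3 * p4))%N.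

Lemma nested_weight_of_shape n : perfect_shape n -> exists w, nested_at_min_weight n w.
Proof.
case=> [[p [a [p_pr [_ ->]]]] | [[p [q [a [b [p_pr [q_pr [pq [_ [_ ->]]]]]]]]] |
  [[p [q [r [a [p_pr [q_pr [r_pr [pqr [_ ->]]]]]]]]] |
   [p1 [p2 [p3 [p4 [pr1 [pr2 [pr3 [pr4 [u ->]]]]]]]]]]]].
- exists (logn p); rewrite -[p ^ a]muln1.
  by apply: nested_at_min_weight_pow_mul; rewrite ?coprimen1 //; apply: ann_chain1.
- exists (logn p); apply: nested_at_min_weight_pow_mul => //; last exact: ann_chain_prime_pow.
  by rewrite coprimeXl // coprimeXr // coprime_primes.
- move: pqr => /and3P[]; rewrite !inE !negb_or => /andP[pq pr] qr _.
  exists (logn p); rewrite -mulnA; apply: nested_at_min_weight_pow_mul => //.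
    by rewrite coprimeXl // coprimeMr !coprime_primes.
  exact: ann_chain_prime_mul.
- by eexists; apply: nested_at_min_weight_sqfree4.
Qed.

Lemma shape_or_divisor_pentagon n : 1 < n -> perfect_shape n \/ divisor_pentagon n.
Proof.
move=> n_gt1; have n_gt0 := ltnW n_gt1.
(* Sort the primes by decreasing exponent, so that one of largest exponent comes first, as in the
   shape p^a q r. *)
have s_sorted := sort_sorted (fun p q => leq_total (logn q n) (logn p n)) (primes n).
have s_perm : perm_eq (sort (fun p q => logn q n <= logn p n) (primes n)) (primes n).
  by rewrite perm_sort.
move: (sort _ _) s_sorted s_perm => s s_sorted s_perm.
have nE : n = \prod_(p <- s) p ^ logn p n.
  by rewrite (perm_big _ s_perm) /= {1}(prod_prime_decomp n_gt0) prime_decompE big_map.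
have s_uniq : uniq s by rewrite (perm_uniq s_perm) primes_uniq.
have s_prime : all prime s.
  by apply/allP => p; rewrite (perm_mem s_perm) mem_primes => /andP[].
have s_log : all (fun p => 0 < logn p n) s.
  by apply/allP => p; rewrite (perm_mem s_perm) logn_gt0.
move: nE s_uniq s_sorted s_prime s_log; clear s_perm; case: s => [|p [|q [|r [|t [|u s]]]]] /=.
- by rewrite big_nil => n1; rewrite n1 in n_gt1.
- rewrite big_seq1 => nE _ _ /andP[p_pr _] /andP[lp _].
  by left; left; exists p, (logn p n).
- rewrite !big_cons big_nil muln1 inE => nE /andP[pq _] _ /and3P[p_pr q_pr _] /and3P[lp lq _].
  by left; right; left; exists p, q, (logn p n), (logn q n).
- rewrite !big_cons big_nil muln1 => nE pqr /and3P[le_qp le_rq _] /and4P[p_pr q_pr r_pr _].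
  move=> /and4P[lp lq lr _]; have [lq2 | lq1] := leqP 2 (logn q n).
    right; apply: (@divisor_pentagon_221 n p q r) => //; first by rewrite /= p_pr q_pr r_pr.
    exact: leq_trans lq2 le_qp.
  have [lq_1 lr_1] : logn q n = 1 /\ logn r n = 1 by lia.
  rewrite lq_1 lr_1 !expn1 mulnA in nE.
  by left; right; right; left; exists p, q, r, (logn p n).
- rewrite !big_cons big_nil muln1 => nE pqrt /and4P[le_qp le_rq le_tr _].
  move=> /and5P[p_pr q_pr r_pr t_pr _] /and5P[lp lq lr lt _].
  have [lp2 | lp1] := leqP 2 (logn p n).
    by right; apply: (@divisor_pentagon_2111 n p q r t) => //; rewrite /= p_pr q_pr r_pr t_pr.
  have [lp_1 lq_1 lr_1 lt_1] : [/\ logn p n = 1, logn q n = 1, logn r n = 1 & logn t n = 1].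
    by split; lia.
  rewrite lp_1 lq_1 lr_1 lt_1 !expn1 !mulnA in nE.
  by left; right; right; right; exists p, q, r, t.
- move=> _ uniq_ps _ /and5P[p_pr q_pr r_pr t_pr /andP[u_pr _]].
  move=> /and5P[lp lq lr lt /andP[lu _]]; right.
  apply: (@divisor_pentagon_11111 n p q r t u) => //; first by rewrite /= p_pr q_pr r_pr t_pr u_pr.
  exact: subseq_uniq (prefix_subseq [:: p; q; r; t; u] s) uniq_ps.
Qed.

Theorem theorem1 (n : nat) (hn : (2 <= n)%N) :
  perfect (@AG_adj ('Z_n : finComNzRingType)) (AG_vertices ('Z_n : finComNzRingType)) <->
  ((exists p1 a1, prime p1 /\ (1 <= a1)%N /\ n = p1 ^ a1) \/
   (exists p1 p2 a1 a2, prime p1 /\ prime p2 /\ p1 != p2 /\ (1 <= a1)%N /\ (1 <= a2)%N /\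
                        n = p1 ^ a1 * p2 ^ a2) \/
   (exists p1 p2 p3 a1, prime p1 /\ prime p2 /\ prime p3 /\ uniq [:: p1; p2; p3] /\
                        (1 <= a1)%N /\ n = p1 ^ a1 * p2 * p3) \/
   (exists p1 p2 p3 p4, prime p1 /\ prime p2 /\ prime p3 /\ prime p4 /\
                        uniq [:: p1; p2; p3; p4] /\ n = p1 * p2 * p3 * p4))%N.
Proof.
change (perfect (@AG_adj ('Z_n : finComNzRingType)) (AG_vertices ('Z_n : finComNzRingType))
  <-> perfect_shape n).
split=> [AG_perfect | /nested_weight_of_shape[w w_nested]].
  have [//|[d1 [d2 [d3 [d4 [d5 [ds pent]]]]]]] := shape_or_divisor_pentagon hn.
  by case: (AG_not_perfect_of_pentagon hn ds pent).
exact (AG_perfect_of_nested hn w_nested).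
Qed.
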